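(* Let $\mathcal{X}_g^*\triangleq \operatorname*{arg\,min}_{\mathbf{z}\in \mathcal{Z}} g(\mathbf{z})$ be the solution set of the lower-level problem and let $\mathcal{X}_k \triangleq \mathcal{Z} \cap \{\mathbf{s}\in\mathbb{R}^d \mid \langle \nabla g(\mathbf{x}_k), \mathbf{s}-\mathbf{x}_k\rangle \leq g(\mathbf{x}_0)-g(\mathbf{x}_k)\}$. Then for any $k\geq 0$, $\mathcal{X}^*_g \subseteq \mathcal{X}_k$.
   Context: Consider the simple bilevel problem $\min_{\mathbf{x}\in\mathbb{R}^d} f(\mathbf{x})$ s.t. $\mathbf{x}\in \operatorname*{arg\,min}_{\mathbf{z}\in\mathcal{Z}} g(\mathbf{z})$, where $\mathcal{Z}\subset\mathbb{R}^d$ is compact and convex and $g$ is convex and continuously differentiable on an open set containing $\mathcal{Z}$. Let $g^*=\min_{\mathbf{z}\in\mathcal{Z}} g(\mathbf{z})$. The points $\mathbf{x}_0,\mathbf{x}_1,\dots$ are iterates in $\mathcal{Z}$ (generated by the CG-BiO algorithm: $\mathbf{x}_0\in\mathcal{Z}$ with $g(\mathbf{x}_0)-g^*\le\epsilon_g/2$, $\mathbf{s}_k\in\operatorname*{arg\,min}_{\mathbf{s}\in\mathcal{X}_k}\langle\nabla f(\mathbf{x}_k),\mathbf{s}\rangle$, $\mathbf{x}_{k+1}=(1-\gamma_k)\mathbf{x}_k+\gamma_k\mathbf{s}_k$ with $\gamma_k\in[0,1]$). *)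

From HB Require Import structures.
From mathcomp Require Import all_boot all_order all_algebra.
From mathcomp Require Import all_classical all_reals all_analysis.
Set Implicit Arguments. Unset Strict Implicit. Unset Printing Implicit Defensive.
Import Order.TTheory GRing.Theory Num.Theory.
Import numFieldNormedType.Exports.
Local Open Scope classical_set_scope.
Local Open Scope ring_scope.

Definition dotv (R : realType) (d : nat) (u v : 'rV[R]_d) : R := (u *m v^T) 0 0.

Definition has_gradient_at (R : realType) (d : nat)
  (h : 'rV[R]_d -> R) (gr : 'rV[R]_d -> 'rV[R]_d) (x : 'rV[R]_d) : Prop :=
  differentiable h x /\ forall v, 'd h x v = dotv (gr x) v.

Definition convex_setR (R : realType) (d : nat) (A : set 'rV[R]_d) : Prop :=
  forall x y t, A x -> A y -> 0 <= t <= 1 -> A ((1 - t) *: x + t *: y).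

Definition convex_on (R : realType) (d : nat) (A : set 'rV[R]_d)
  (h : 'rV[R]_d -> R) : Prop :=
  forall x y t, A x -> A y -> 0 <= t <= 1 ->
    h ((1 - t) *: x + t *: y) <= (1 - t) * h x + t * h y.

Definition argmin_on (R : realType) (T : Type) (A : set T) (h : T -> R) : set T :=
  [set z | A z /\ forall w, A w -> h z <= h w].

Definition Xset (R : realType) (d : nat) (Z : set 'rV[R]_d)
  (g : 'rV[R]_d -> R) (gradg : 'rV[R]_d -> 'rV[R]_d) (x0 xk : 'rV[R]_d)
  : set 'rV[R]_d :=
  Z `&` [set s | dotv (gradg xk) (s - xk) <= g x0 - g xk].

From HB Require Import structures.
From mathcomp Require Import all_boot all_order all_algebra.
From mathcomp Require Import all_classical all_reals all_analysis.
From mathcomp Require Import lra.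
Import Order.TTheory GRing.Theory Num.Theory.
Import numFieldNormedType.Exports.
Local Open Scope classical_set_scope.
Local Open Scope ring_scope.

(* The first-order characterization of convexity, g z >= g x_k + <grad g(x_k), z - x_k>,
   applied to a minimizer z of g on Z gives <grad g(x_k), z - x_k> <= g z - g x_k
   <= g x_0 - g x_k, provided x_k lies in Z; and the iterates stay in Z because each
   is a convex combination of the previous iterate and a point s_k of X_k, a subset of Z. *)

Section ConvexFirstOrder.
Context {R : realType} {d : nat} {Z : set 'rV[R]_d} {g : 'rV[R]_d -> R}.

Lemma convex_on_derive_le {x z : 'rV[R]_d} :
  convex_on Z g -> Z x -> Z z -> derivable g x (z - x) ->
  'D_(z - x) g x <= g z - g x.
Proof.
move=> cvx_g Zx Zz dg.
set q := fun t : R => t^-1 *: ((g \o shift x) (t *: (z - x)) - g x).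
have q_right : q t @[t --> 0^'+] --> 'D_(z - x) g x.
  exact/cvg_dnbhs_at_right/dg.
(* For 0 < t <= 1, convexity bounds the difference quotient q t by the chord slope. *)
apply: (cvgr_to_le q_right); near=> t.
have t_gt0 : 0 < t by near: t; exact: nbhs_right_gt.
have t_le1 : t <= 1 by near: t; exact: nbhs_right_ltW ltr01.
rewrite /q /= /GRing.scale /=.
have -> : t *: (z - x) + x = (1 - t) *: x + t *: z.
  by rewrite scalerBr scalerBl scale1r addrAC [_ *: z + x]addrC addrAC.
have := cvx_g x z t Zx Zz; rewrite t_le1 ltW // => /(_ isT) g_chord.
rewrite ler_pdivrMl // mulrC mulrBl.
lra.
Unshelve. all: by end_near.
Qed.

Lemma convex_on_gradient_le {gr : 'rV[R]_d -> 'rV[R]_d} {x z : 'rV[R]_d} :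
  convex_on Z g -> Z x -> Z z -> has_gradient_at g gr x ->
  dotv (gr x) (z - x) <= g z - g x.
Proof.
move=> cvx_g Zx Zz [dg <-]; rewrite -deriveE //.
exact/(convex_on_derive_le cvx_g)/diff_derivable.
Qed.

Lemma argmin_on_sub_Xset {gr : 'rV[R]_d -> 'rV[R]_d} {x0 xk : 'rV[R]_d} :
  convex_on Z g -> Z x0 -> Z xk -> has_gradient_at g gr xk ->
  argmin_on Z g `<=` Xset Z g gr x0 xk.
Proof.
move=> cvx_g Zx0 Zxk dg z [Zz z_min]; split => //=.
apply: le_trans (convex_on_gradient_le cvx_g Zxk Zz dg) _.
by rewrite lerD2r z_min.
Qed.

End ConvexFirstOrder.

Lemma convex_setR_iterates {R : realType} {d : nat} {Z : set 'rV[R]_d}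
    {x s : nat -> 'rV[R]_d} {gamma : nat -> R} :
  convex_setR Z -> Z (x 0%N) -> (forall k, Z (s k)) ->
  (forall k, 0 <= gamma k <= 1) ->
  (forall k, x k.+1 = (1 - gamma k) *: x k + gamma k *: s k) ->
  forall k, Z (x k).
Proof.
move=> cvxZ Zx0 Zs gamma01 x_next.
by elim=> [|k IHk] //; rewrite x_next; apply: cvxZ.
Qed.

Theorem lemma1 (R : realType) (d : nat) (Z U : set 'rV[R]_d)
  (f g : 'rV[R]_d -> R) (gradf gradg : 'rV[R]_d -> 'rV[R]_d)
  (gstar eps_g : R) (x s : nat -> 'rV[R]_d) (gamma : nat -> R) :
  compact Z -> convex_setR Z ->
  open U -> Z `<=` U ->
  (forall z, U z -> has_gradient_at g gradg z) ->
  {within U, continuous gradg} ->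
  convex_on Z g ->
  (exists2 z, Z z & g z = gstar) -> (forall z, Z z -> gstar <= g z) ->
  (forall z, Z z -> has_gradient_at f gradf z) ->
  Z (x 0%N) -> g (x 0%N) - gstar <= eps_g / 2 ->
  (forall k, argmin_on (Xset Z g gradg (x 0%N) (x k))
               (fun y => dotv (gradf (x k)) y) (s k)) ->
  (forall k, 0 <= gamma k <= 1) ->
  (forall k, x k.+1 = (1 - gamma k) *: x k + gamma k *: s k) ->
  forall k, argmin_on Z g `<=` Xset Z g gradg (x 0%N) (x k).
Proof.
move=> _ cvxZ _ ZU grad_g _ cvx_g _ _ _ Zx0 _ s_argmin gamma01 x_next k.
have Zs j : Z (s j) by have [[]] := s_argmin j.
have Zx := convex_setR_iterates cvxZ Zx0 Zs gamma01 x_next.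
exact: argmin_on_sub_Xset cvx_g Zx0 (Zx k) (grad_g _ (ZU _ (Zx k))).
Qed.
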